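(* Let $\mathfrak{g}$ be one of the following $6$-dimensional nilpotent Lie algebras: $(0,0,12,13,14,15)$, $(0,0,12,13,14,23+15)$, $(0,0,0,12,14,24)$, $(0,0,0,12,13+42,14+23)$, $(0,0,0,12,14,13+42)$, $(0,0,0,12,13+14,24)$, $(0,0,0,12,13,14)$, $(0,0,0,0,12,15)$. Then $\mathfrak{g}$ admits a coherent splitting $\mathfrak{g}^*=V_1\oplus V_2$ with $V_1=\operatorname{span}\{e^1,e^2\}$ (so that $\Lambda^{2,0}$ is spanned by $e^{12}$) for which $h^{0,3}=0=h^{0,4}$.
   Context: Notation: $(0,0,12,13,14,15)$ denotes the Lie algebra having a basis $e^1,\dots,e^6$ of $\mathfrak{g}^*$ with $de^1=de^2=0$, $de^3=e^{12}$, $de^4=e^{13}$, $de^5=e^{14}$, $de^6=e^{15}$, where $e^{ij}=e^i\wedge e^j$, entries like $13+42$ mean $e^{13}+e^4\wedge e^2$, and $d$ is the Chevalley–Eilenberg differential. A coherent splitting is a decomposition $\mathfrak{g}^*=V_1\oplus V_2$ with $\dim V_1=2$ such that, with $\Lambda^{p,q}=\Lambda^pV_1\otimes\Lambda^qV_2$, $d(\Lambda^{p,q})\subset\Lambda^{p+1,q}+\Lambda^{p+2,q-1}$. With $F^k_p=\bigoplus_{p'\ge p}\Lambda^{p',k-p'}$, $Z^k$ the closed $k$-forms, $H^k$ the $k$-th cohomology of $(\Lambda^*\mathfrak{g}^*,d)$ and $H^k_p\subset H^k$ the image of $Z^k\cap F^k_p$, set $H^{p,q}=H^{p+q}_p/H^{p+q}_{p+1}$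 and $h^{p,q}=\dim H^{p,q}$ (these depend only on $V_1$). *)

From HB Require Import structures.
From mathcomp Require Import all_boot all_order all_algebra.
From mathcomp Require Import reals.
Set Implicit Arguments. Unset Strict Implicit. Unset Printing Implicit Defensive.
Import Order.TTheory GRing.Theory Num.Theory.
Local Open Scope ring_scope.

Section ExtAlg.
Variable R : realType.

(* Λ^* g^* : a eform is given by its coefficients on the basis e^S = e^{i1}∧...∧e^{ik}
   (S = {i1 < ... < ik} ⊆ {0..5}, index i standing for e^{i+1}). *)
Definition eform := {ffun {set 'I_6} -> R^o}.

Definition eb (S : {set 'I_6}) : eform := [ffun T => (T == S)%:R].

(* sign of e^S ∧ e^T = ± e^{S ∪ T} (S, T disjoint): number of inversions *)
Definition wsign (S T : {set 'I_6}) : R :=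
  (-1) ^+ #|[set p : 'I_6 * 'I_6 | (p.1 \in S) && (p.2 \in T) && (p.2 < p.1)%N]|.

Definition wedge (a b : eform) : eform :=
  [ffun U => \sum_(S : {set 'I_6}) \sum_(T : {set 'I_6})
     ((S :&: T == set0) && (S :|: T == U))%:R * wsign S T * a S * b T].

(* e i := e^i with the paper's 1-based indexing *)
Definition e (i : nat) : eform := eb [set (inord i.-1 : 'I_6)].

(* dE i is d(e^{i+1}); d is extended to Λ^* g^* as a (graded) derivation:
   d(e^{i1}∧...∧e^{ik}) = Σ_j (-1)^{j-1} e^{i1}∧..∧ d e^{ij} ∧..∧e^{ik}
   (the 2-forms d e^{ij} commute with everything). *)
Definition dbasis (dE : 'I_6 -> eform) (S : {set 'I_6}) : eform :=
  \sum_(i in S) ((-1) ^+ #|[set j in S | (j < i)%N]| : R) *: wedge (dE i) (eb (S :\ i)).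

Definition dfun (dE : 'I_6 -> eform) (x : eform) : eform :=
  \sum_(S : {set 'I_6}) x S *: dbasis dE S.

Definition dlin (dE : 'I_6 -> eform) : 'End(eform) := linfun (dfun dE).

Definition wedgeS (U W : {vspace eform}) : {vspace eform} :=
  <<[seq wedge u w | u <- vbasis U, w <- vbasis W]>>%VS.

Fixpoint Lam (V : {vspace eform}) (k : nat) : {vspace eform} :=
  if k is k'.+1 then wedgeS V (Lam V k') else <[eb set0]>%VS.

Definition G1 : {vspace eform} := <<[seq eb [set i] | i <- enum 'I_6]>>%VS.
Definition V1 : {vspace eform} := <<[:: e 1; e 2]>>%VS.

Definition Lpq (V2 : {vspace eform}) (p q : nat) : {vspace eform} :=
  wedgeS (Lam V1 p) (Lam V2 q).

Definition Lpq_shift (V2 : {vspace eform}) (p q : nat) : {vspace eform} :=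
  if q is q'.+1 then Lpq V2 p.+2 q' else 0%VS.

Definition complement (V2 : {vspace eform}) : Prop :=
  (V2 <= G1)%VS /\ (V1 :&: V2)%VS = 0%VS /\ (V1 + V2)%VS = G1.

Definition coherent (dE : 'I_6 -> eform) (V2 : {vspace eform}) : Prop :=
  complement V2 /\
  forall p q : nat, (dlin dE @: Lpq V2 p q <= Lpq V2 p.+1 q + Lpq_shift V2 p q)%VS.

Definition Fil (V2 : {vspace eform}) (k p : nat) : {vspace eform} :=
  (\sum_(p <= p' < k.+1) Lpq V2 p' (k - p'))%VS.

Definition Zk (dE : 'I_6 -> eform) (k : nat) : {vspace eform} :=
  (lker (dlin dE) :&: Lam G1 k)%VS.
Definition Bk (dE : 'I_6 -> eform) (k : nat) : {vspace eform} :=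
  if k is k'.+1 then (dlin dE @: Lam G1 k')%VS else 0%VS.

(* preimage in Z^k of H^k_p : (Z^k ∩ F^k_p) + B^k ; H^k_p = this / B^k *)
Definition Hfil (dE : 'I_6 -> eform) (V2 : {vspace eform}) (k p : nat) : {vspace eform} :=
  (Zk dE k :&: Fil V2 k p + Bk dE k)%VS.

(* h^{p,q} = dim H^{p+q}_p / H^{p+q}_{p+1} *)
Definition hpq (dE : 'I_6 -> eform) (V2 : {vspace eform}) (p q : nat) : nat :=
  (\dim (Hfil dE V2 (p + q) p) - \dim (Hfil dE V2 (p + q) p.+1))%N.

Definition mk6 (a b c d f g : eform) : 'I_6 -> eform :=
  fun i => nth 0 [:: a; b; c; d; f; g] i.
Definition ee (i j : nat) : eform := wedge (e i) (e j).

Definition g1 := mk6 0 0 (ee 1 2) (ee 1 3) (ee 1 4) (ee 1 5).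
Definition g2 := mk6 0 0 (ee 1 2) (ee 1 3) (ee 1 4) (ee 2 3 + ee 1 5).
Definition g3 := mk6 0 0 0 (ee 1 2) (ee 1 4) (ee 2 4).
Definition g4 := mk6 0 0 0 (ee 1 2) (ee 1 3 + ee 4 2) (ee 1 4 + ee 2 3).
Definition g5 := mk6 0 0 0 (ee 1 2) (ee 1 4) (ee 1 3 + ee 4 2).
Definition g6 := mk6 0 0 0 (ee 1 2) (ee 1 3 + ee 1 4) (ee 2 4).
Definition g7 := mk6 0 0 0 (ee 1 2) (ee 1 3) (ee 1 4).
Definition g8 := mk6 0 0 0 0 (ee 1 2) (ee 1 5).

End ExtAlg.

(* Take V2 = span{e^3,...,e^6}. Then V1, V2, the spaces Λ^{p,q} and F^k_p are all
   spanned by monomials e^S, so coherence and the vanishing of h^{0,k} become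
   statements about the coefficients of the forms d e^S, which are integers.
   Coherence says that d e^S only involves monomials of bidegree (p+1,q) or (p+2,q-1).
   For h^{0,k} = 0 it suffices that every closed k-form lies in F^k_1, i.e. has zero
   coefficient on each monomial e^T with T ⊆ {3,...,6}; this follows from a linear
   functional φ on (k+1)-forms with φ ∘ d = (coefficient of e^T) on k-forms, since then
   x_T = φ(dx) = 0 for closed x. Encoding subsets of {1,...,6} as bitmasks, the
   coherence table and these functionals are checked by evaluation. *)

From HB Require Import structures.
From mathcomp Require Import all_boot all_order all_algebra.
From mathcomp Require Import reals.
Set Implicit Arguments. Unset Strict Implicit. Unset Printing Implicit Defensive.
Import Order.TTheory GRing.Theory Num.Theory.

(* Bit i of the mask a stands for e^{i+1}; e.g. the mask 3 encodes e^{12}. *)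
Definition nbit (a i : nat) : bool := odd (a %/ 2 ^ i).
Definition bits_set (a : nat) : {set 'I_6} := [set i : 'I_6 | nbit a i].
Definition idx6 : seq nat := iota 0 6.

Definition represents (X : {set 'I_6}) (f : nat -> bool) := forall i : 'I_6, (i \in X) = f i.

Lemma bits_set_represents a : represents (bits_set a) (nbit a).
Proof. by move=> i; rewrite inE. Qed.

Lemma represents0 : represents set0 (fun _ => false).
Proof. by move=> i; rewrite inE. Qed.

Definition S12 : {set 'I_6} := [set i : 'I_6 | (i < 2)%N].

Lemma represents_S12 : represents S12 (fun m => (m < 2)%N).
Proof. by move=> i; rewrite inE. Qed.

Section Represents.
Variables (X Y : {set 'I_6}) (f g : nat -> bool).
Hypotheses (hX : represents X f) (hY : represents Y g).

Lemma representsU : represents (X :|: Y) (fun m => f m || g m).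
Proof. by move=> i; rewrite inE hX hY. Qed.

Lemma representsI : represents (X :&: Y) (fun m => f m && g m).
Proof. by move=> i; rewrite inE hX hY. Qed.

Lemma representsD : represents (X :\: Y) (fun m => ~~ g m && f m).
Proof. by move=> i; rewrite inE hX hY. Qed.

Lemma representsD1 (n : 'I_6) : represents (X :\ n) (fun m => f m && (m != n)).
Proof. by move=> i; rewrite !inE hX andbC. Qed.

Lemma represents_ltn n : represents [set j in X | (j < n)%N] (fun m => f m && (m < n)%N).
Proof. by move=> i; rewrite !inE hX. Qed.

Lemma represents_eq : (X == Y) = all (fun m => f m == g m) idx6.
Proof.
apply/eqP/allP => [E m|H].
  rewrite mem_iota add0n => /andP[_ hm].
  by rewrite -(hX (Ordinal hm)) -(hY (Ordinal hm)) E.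
by apply/setP => i; rewrite hX hY; apply/eqP/H; rewrite mem_iota /= ltn_ord.
Qed.

Lemma represents_card : #|X| = count f idx6.
Proof.
rewrite -sum1_card (eq_bigl (fun i : 'I_6 => f i)) //.
by rewrite -(big_mkord f (fun _ => 1%N)) sum1_count.
Qed.

End Represents.

Lemma represents_disjoint X Y f g : represents X f -> represents Y g ->
  (X :&: Y == set0) = all (fun m => ~~ (f m && g m)) idx6.
Proof.
move=> hX hY; rewrite (represents_eq (representsI hX hY) represents0).
by apply: eq_all => m; case: (f m && g m).
Qed.

Definition inversions (f g : nat -> bool) : nat :=
  sumn [seq count (fun m2 => f m1 && g m2 && (m2 < m1)%N) idx6 | m1 <- idx6].

Lemma represents_inversions X Y f g : represents X f -> represents Y g ->
  #|[set p : 'I_6 * 'I_6 | (p.1 \in X) && (p.2 \in Y) && (p.2 < p.1)%N]| = inversions f g.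
Proof.
move=> hX hY; pose c (i j : nat) := f i && g j && (j < i)%N.
transitivity #|[pred p : 'I_6 * 'I_6 | c p.1 p.2]|.
  by apply: eq_card => p; rewrite !inE hX hY.
rewrite -sum1_card big_mkcond -(pair_bigA _ (fun i j : 'I_6 => if c i j then 1%N else 0%N)) /=.
rewrite /inversions sumnE big_map -[idx6]/(index_iota 0 6) big_mkord.
by apply: eq_bigr => i _; rewrite -sum1_count [RHS]big_mkcond [RHS]big_mkord.
Qed.

Lemma nbit_inj n a b : (a < 2 ^ n)%N -> (b < 2 ^ n)%N ->
  (forall i, (i < n)%N -> nbit a i = nbit b i) -> a = b.
Proof.
elim: n a b => [|n IH] a b; first by rewrite expn0 !ltnS !leqn0 => /eqP-> /eqP->.
move=> ha hb H; have := H 0%N isT; rewrite /nbit expn0 !divn1 => odd_ab.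
have half_ab : (a %/ 2 = b %/ 2)%N.
  apply: IH => [||i hi]; rewrite ?ltn_divLR -?expnSr //.
  by have := H i.+1 hi; rewrite /nbit !expnS !divnMA.
by rewrite (divn_eq a 2) (divn_eq b 2) half_ab !modn2 odd_ab.
Qed.

Lemma bits_set_inj : injective (fun a : 'I_64 => bits_set a).
Proof.
move=> a b /= E; apply/val_inj/(@nbit_inj 6); rewrite ?ltn_ord // => i hi.
by rewrite -(bits_set_represents a (Ordinal hi)) -(bits_set_represents b (Ordinal hi)) E.
Qed.

Lemma bits_set_bij : bijective (fun a : 'I_64 => bits_set a).
Proof.
apply: inj_card_bij bits_set_inj _.
by rewrite -cardsT -powersetT card_powerset cardsT !card_ord.
Qed.

Lemma bits_setP X : exists2 a, (a < 64)%N & X = bits_set a.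
Proof. by have [g _ gK] := bits_set_bij; exists (g X) => //; rewrite gK. Qed.

Local Open Scope ring_scope.

Definition signz (k : nat) : int := (-1) ^+ odd k.

Section ExteriorCoordinates.
Variable R : realType.
Local Notation F := (eform R).
Local Notation eb := (@eb R).
Implicit Types (P Q : pred {set 'I_6}) (x : F).

Lemma ebE X Y : eb X Y = (Y == X)%:R.
Proof. by rewrite ffunE. Qed.

Lemma scaleE k x X : (k *: x) X = k * x X.
Proof. by rewrite ffunE. Qed.

Lemma form_expand x : x = \sum_X x X *: eb X.
Proof.
apply/ffunP => Y; rewrite sum_ffunE (bigD1 Y) //= big1 => [|X /negbTE nYX].
  by rewrite scaleE ebE eqxx mulr1 addr0.
by rewrite scaleE ebE eq_sym nYX mulr0.
Qed.

Lemma memv_span_eb s x :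
  (x \in <<[seq eb X | X <- s]>>%VS) <-> (forall X, X \notin s -> x X = 0).
Proof.
split => [/(@coord_span _ _ _ (in_tuple _) x) -> X Xs|H].
  rewrite sum_ffunE big1 // => i _; have hi : (i < size s)%N by rewrite -(size_map eb).
  rewrite scaleE (nth_map set0) // ebE; case: eqP => [XE|]; last by rewrite mulr0.
  by case/negP: Xs; rewrite XE mem_nth.
rewrite (form_expand x); apply: memv_suml => X _.
have [Xs|/H->] := boolP (X \in s); last by rewrite scale0r mem0v.
by apply/memvZ/memv_span/map_f.
Qed.

Definition coordsp P : {vspace F} := <<[seq eb X | X <- enum P]>>%VS.

Lemma memv_coordsp P x : (x \in coordsp P) <-> (forall X, ~~ P X -> x X = 0).
Proof.
by rewrite memv_span_eb; split => H X; have := H X; rewrite mem_enum.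
Qed.

Lemma span_eb s : <<[seq eb X | X <- s]>>%VS = coordsp (fun X => X \in s).
Proof.
apply/vspaceP => x; apply/idP/idP => [/memv_span_eb H|/memv_coordsp H].
  by apply/memv_coordsp.
by apply/memv_span_eb.
Qed.

Lemma eb_coordsp P X : P X -> eb X \in coordsp P.
Proof. by move=> PX; apply/memv_coordsp => Y; rewrite ebE; case: eqP => // ->; rewrite PX. Qed.

Lemma coordspS P Q : (forall X, P X -> Q X) -> (coordsp P <= coordsp Q)%VS.
Proof.
move=> PQ; apply/subvP => x /memv_coordsp H; apply/memv_coordsp => X nQX.
by apply: H; apply: contra nQX; apply: PQ.
Qed.

Lemma eq_coordsp P Q : P =1 Q -> coordsp P = coordsp Q.
Proof. by move=> PQ; apply: subv_anti; rewrite !coordspS // => X; rewrite PQ. Qed.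

Lemma coordsp_add P Q : (coordsp P + coordsp Q)%VS = coordsp (predU P Q).
Proof.
apply: subv_anti; apply/andP; split.
  by rewrite subv_add; apply/andP; split; apply: coordspS => X /= ->; rewrite ?orbT.
apply/subvP => x /memv_coordsp H; rewrite (form_expand x); apply: memv_suml => X _.
have [PX|nPX] := boolP (P X); first by apply/memvZ/(subvP (addvSl _ _))/eb_coordsp.
have [QX|nQX] := boolP (Q X); first by apply/memvZ/(subvP (addvSr _ _))/eb_coordsp.
by rewrite H ?scale0r ?mem0v //= negb_or nPX.
Qed.

Lemma coordsp_cap P Q : (coordsp P :&: coordsp Q)%VS = coordsp (predI P Q).
Proof.
apply/vspaceP => x; rewrite memv_cap.
apply/andP/idP => [[/memv_coordsp HP /memv_coordsp HQ]|/memv_coordsp H].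
  by apply/memv_coordsp => X; rewrite /= negb_and => /orP[/HP|/HQ].
by split; apply/memv_coordsp => X nX; apply: H; rewrite /= negb_and nX ?orbT.
Qed.

Lemma coordsp_pred0 P : P =1 xpred0 -> coordsp P = 0%VS.
Proof.
move=> P0; apply/vspaceP => x; rewrite memv0.
apply/idP/eqP => [/memv_coordsp H|->]; last by apply/memv_coordsp => X _; rewrite ffunE.
by apply/ffunP => X; rewrite ffunE H ?P0.
Qed.

Implicit Types a b : F.

Lemma wedgeE a b U : wedge a b U = \sum_X \sum_Y
  ((X :&: Y == set0) && (X :|: Y == U))%:R * wsign R X Y * a X * b Y.
Proof. by rewrite ffunE. Qed.

Lemma wedgeDl a a' b : wedge (a + a') b = wedge a b + wedge a' b.
Proof.
apply/ffunP => U; rewrite [in RHS]ffunE !wedgeE -big_split; apply: eq_bigr => X _.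
by rewrite -big_split; apply: eq_bigr => Y _; rewrite ffunE mulrDr mulrDl.
Qed.

Lemma wedgeDr a b b' : wedge a (b + b') = wedge a b + wedge a b'.
Proof.
apply/ffunP => U; rewrite [in RHS]ffunE !wedgeE -big_split; apply: eq_bigr => X _.
by rewrite -big_split; apply: eq_bigr => Y _; rewrite ffunE mulrDr.
Qed.

Lemma wedgeZl k a b : wedge (k *: a) b = k *: wedge a b.
Proof.
apply/ffunP => U; rewrite scaleE !wedgeE mulr_sumr; apply: eq_bigr => X _.
by rewrite mulr_sumr; apply: eq_bigr => Y _; rewrite scaleE mulrCA !mulrA.
Qed.

Lemma wedgeZr k a b : wedge a (k *: b) = k *: wedge a b.
Proof.
apply/ffunP => U; rewrite scaleE !wedgeE mulr_sumr; apply: eq_bigr => X _.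
by rewrite mulr_sumr; apply: eq_bigr => Y _; rewrite scaleE mulrCA.
Qed.

Lemma wedge_suml (I : Type) (r : seq I) (f : I -> F) b :
  wedge (\sum_(i <- r) f i) b = \sum_(i <- r) wedge (f i) b.
Proof.
have wedge0 : wedge 0 b = 0 by have := wedgeZl 0 0 b; rewrite !scale0r.
exact: (big_morph (fun a : F => wedge a b) (fun a a' : F => wedgeDl a a' b) wedge0).
Qed.

Lemma wedge_sumr (I : Type) (r : seq I) (f : I -> F) a :
  wedge a (\sum_(i <- r) f i) = \sum_(i <- r) wedge a (f i).
Proof.
have wedge0 : wedge a 0 = 0 by have := wedgeZr 0 a 0; rewrite !scale0r.
exact: (big_morph (wedge a) (wedgeDr a) wedge0).
Qed.

Lemma wedge_eb_coef X Y U :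
  wedge (eb X) (eb Y) U = ((X :&: Y == set0) && (X :|: Y == U))%:R * wsign R X Y.
Proof.
rewrite wedgeE (bigD1 X) //= [X in _ + X]big1 ?addr0 => [|X' /negbTE nX'].
  rewrite (bigD1 Y) //= [X in _ + X]big1 ?addr0 => [|Y' /negbTE nY'].
    by rewrite !ebE !eqxx !mulr1.
  by rewrite !ebE nY' mulr0.
by rewrite big1 // => Y' _; rewrite !ebE nX' mulr0 mul0r.
Qed.

Lemma wedge_eb X Y :
  wedge (eb X) (eb Y) = ((X :&: Y == set0)%:R * wsign R X Y) *: eb (X :|: Y).
Proof.
apply/ffunP => U; rewrite wedge_eb_coef scaleE ebE [U == _]eq_sym.
by case: (_ == set0); case: (_ == U); rewrite /= ?mulr1 ?mulr0 ?mul0r.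
Qed.

Definition wedge_supp P Q : pred {set 'I_6} := fun U =>
  [exists X, exists Y, [&& P X, Q Y, X :&: Y == set0 & X :|: Y == U]].

Lemma wedge_coordsp P Q a b :
  a \in coordsp P -> b \in coordsp Q -> wedge a b \in coordsp (wedge_supp P Q).
Proof.
move=> /memv_coordsp Ha /memv_coordsp Hb; apply/memv_coordsp => U nU.
rewrite wedgeE big1 // => X _; rewrite big1 // => Y _.
have [PX|/Ha->] := boolP (P X); last by rewrite mulr0 mul0r.
have [QY|/Hb->] := boolP (Q Y); last by rewrite mulr0.
case: andP => [[dXY UXY]|_]; last by rewrite !mul0r.
by case/negP: nU; apply/existsP; exists X; apply/existsP; exists Y; rewrite PX QY dXY.
Qed.

Lemma memv_wedgeS (U W : {vspace F}) u w :
  u \in U -> w \in W -> wedge u w \in wedgeS U W.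
Proof.
move=> uU wW; rewrite (coord_vbasis uU) (coord_vbasis wW) wedge_suml.
apply: memv_suml => i _; rewrite wedgeZl wedge_sumr; apply/memvZ/memv_suml => j _.
by rewrite wedgeZr; apply/memvZ/memv_span/allpairs_f; apply: mem_nth; rewrite size_tuple.
Qed.

Lemma wsign_neq0 X Y : wsign R X Y != 0.
Proof. by rewrite expf_neq0 // oppr_eq0 oner_eq0. Qed.

Lemma wedgeS_coordsp P Q : wedgeS (coordsp P) (coordsp Q) = coordsp (wedge_supp P Q).
Proof.
apply: subv_anti; apply/andP; split.
  apply/span_subvP => z /allpairsP[[u w] [/= uB wB ->]].
  by apply: wedge_coordsp; apply: vbasis_mem.
apply/subvP => x /memv_coordsp Hx; rewrite (form_expand x); apply: memv_suml => U _.
have [/existsP[X /existsP[Y /and4P[PX QY dXY /eqP <-]]]|/Hx->] := boolP (wedge_supp P Q U);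
  last by rewrite scale0r mem0v.
apply: memvZ; have := memv_wedgeS (eb_coordsp PX) (eb_coordsp QY).
rewrite wedge_eb dXY mul1r => /(memvZ (wsign R X Y)^-1).
by rewrite scalerA mulVf ?wsign_neq0 // scale1r.
Qed.

Definition ksub (X0 : {set 'I_6}) (k : nat) : pred {set 'I_6} :=
  fun X => (X \subset X0) && (#|X| == k).

Lemma wedge_supp_ksub X0 k : wedge_supp (ksub X0 1) (ksub X0 k) =1 ksub X0 k.+1.
Proof.
move=> U; apply/existsP/andP => [|[sU cU]].
  case=> X /existsP[Y /and4P[/andP[sX cX] /andP[sY cY] /eqP dXY /eqP <-]].
  by rewrite subUset sX cardsU dXY cards0 subn0 (eqP cX) (eqP cY).
have /card_gt0P[i iU] : (0 < #|U|)%N by rewrite (eqP cU).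
exists [set i]; apply/existsP; exists (U :\ i); apply/and4P; split.
- by rewrite /ksub cards1 sub1set (subsetP sU).
- by rewrite /ksub (subset_trans (subD1set _ _) sU); move: cU; rewrite (cardsD1 i) iU.
- by apply/eqP/setP => j; rewrite !inE; case: eqP.
- by rewrite setD1K.
Qed.

Lemma Lam_coordsp X0 k : Lam (coordsp (ksub X0 1)) k = coordsp (ksub X0 k).
Proof.
elim: k => [|k IH] /=; last by rewrite IH wedgeS_coordsp; apply/eq_coordsp/wedge_supp_ksub.
rewrite -span_seq1 (span_eb [:: set0]); apply: eq_coordsp => X.
by rewrite inE /ksub cards_eq0 andbC; case: eqP => // ->; rewrite sub0set.
Qed.

Lemma V1_coordsp : V1 R = coordsp (ksub S12 1).
Proof.
rewrite /V1 /e (span_eb [:: [set inord 0]; [set inord 1]]); apply: eq_coordsp => X.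
apply/idP/andP => [|[sX /cards1P[i Xi]]].
  by rewrite !inE => /orP[]/eqP->; rewrite cards1 sub1set inE inordK.
move: sX; rewrite Xi sub1set inE !inE.
case: i {Xi} => [[|[|//]] hi] _; apply/orP; [left|right];
  by apply/eqP; congr [set _]; apply/val_inj; rewrite /= inordK.
Qed.

Lemma G1_coordsp : G1 R = coordsp (ksub setT 1).
Proof.
have -> : G1 R = <<[seq eb X | X <- [seq [set i] | i <- enum 'I_6]]>>%VS.
  by rewrite /G1 -[in RHS]map_comp.
rewrite span_eb; apply: eq_coordsp => X; rewrite /ksub subsetT.
apply/mapP/cards1P => [[i _ ->]|[i ->]]; first by exists i.
by exists i; rewrite ?mem_enum.
Qed.

Definition V2 : {vspace F} := coordsp (ksub (~: S12) 1).

Lemma complement_V2 : complement V2.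
Proof.
rewrite /complement V1_coordsp G1_coordsp coordsp_cap coordsp_add; split; [|split].
- by apply: coordspS => X /andP[_ cX]; rewrite /ksub subsetT.
- apply: coordsp_pred0 => X; apply/andP => -[/andP[s1 /cards1P[i Xi]] /andP[s2 _]].
  by move: s1 s2; rewrite Xi !sub1set !inE => ->.
- apply: eq_coordsp => X; rewrite /= /ksub subsetT.
  by case: cards1P => [[i ->]|_]; rewrite ?andbF // !sub1set !inE !andbT orbN.
Qed.

Definition bideg (p q : nat) : pred {set 'I_6} :=
  fun U => (#|U :&: S12| == p) && (#|U :\: S12| == q).

Lemma Lpq_coordsp p q : Lpq V2 p q = coordsp (bideg p q).
Proof.
rewrite /Lpq V1_coordsp /V2 !Lam_coordsp wedgeS_coordsp; apply: eq_coordsp => U.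
apply/existsP/andP => [|[cA cB]].
  case=> X /existsP[Y /and4P[/andP[sX cX] /andP[sY cY] _ /eqP <-]].
  have dY : [disjoint Y & S12] by rewrite disjoints_subset.
  rewrite setIUl setDUl (setIidPl sX) (setDidPl dY).
  by rewrite (eqP (etrans (setI_eq0 _ _) dY)) (eqP (etrans (setD_eq0 _ _) sX)) setU0 set0U.
exists (U :&: S12); apply/existsP; exists (U :\: S12); apply/and4P; split.
- by rewrite /ksub subsetIr.
- by rewrite /ksub cB andbT; apply/subsetP => j; rewrite !inE => /andP[].
- by apply/eqP/setP => j; rewrite !inE; case: (j \in U); case: (j < 2)%N.
- by rewrite setID.
Qed.

End ExteriorCoordinates.

(* An integer combination of monomials, as (mask, coefficient) pairs. *)
Notation zform := (seq (nat * int)).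

Definition zsum (T : Type) (s : seq T) (f : T -> int) : int := foldr (fun x z => f x + z) 0 s.

Definition wedge_coefz (f g h : nat -> bool) : int :=
  if all (fun m => ~~ (f m && g m)) idx6 && all (fun m => (f m || g m) == h m) idx6
  then signz (inversions f g) else 0.

Definition dcoef (L : seq zform) (a u : nat) : int :=
  zsum idx6 (fun n => if nbit a n then
    signz (count (fun m => nbit a m && (m < n)%N) idx6) *
    zsum (nth [::] L n) (fun pc =>
      pc.2 * wedge_coefz (nbit pc.1) (fun m => nbit a m && (m != n)) (nbit u))
  else 0).

Lemma intr_zsum (R : pzRingType) (T : Type) (s : seq T) f :
  (zsum s f)%:~R = \sum_(x <- s) (f x)%:~R :> R.
Proof. by elim: s => [|x s IH]; rewrite ?big_nil ?big_cons //= intrD IH. Qed.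

Lemma signzE (R : pzRingType) k : (signz k)%:~R = (-1) ^+ k :> R.
Proof. by rewrite rmorphXn rmorphN1 signr_odd. Qed.

Section Differential.
Variable R : realType.
Local Notation F := (eform R).
Local Notation eb := (@eb R).

Lemma wedge_eb_coefz X Y U f g h :
  represents X f -> represents Y g -> represents U h ->
  wedge (eb X) (eb Y) U = (wedge_coefz f g h)%:~R.
Proof.
move=> hX hY hU; rewrite wedge_eb_coef /wsign (represents_inversions hX hY) -signzE.
rewrite (represents_disjoint hX hY) (represents_eq (representsU hX hY) hU) /wedge_coefz.
by case: ifP; rewrite ?mul1r ?mul0r.
Qed.

Definition dE_of (L : seq zform) : 'I_6 -> F :=
  fun i => \sum_(pc <- nth [::] L i) pc.2%:~R *: eb (bits_set pc.1).

Variable dE : 'I_6 -> F.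

Lemma dlinE x : dlin dE x = dfun dE x.
Proof.
have dfun_linear : linear (dfun dE).
  move=> k u v; rewrite /dfun scaler_sumr -big_split; apply: eq_bigr => X _.
  by rewrite !ffunE scalerDl scalerA.
pose dL : {linear F -> F} := HB.pack (dfun dE) (GRing.isLinear.Build _ _ _ _ _ dfun_linear).
exact: (lfunE dL x).
Qed.

Lemma dlin_coef x U : dlin dE x U = \sum_X x X * dbasis dE X U.
Proof. by rewrite dlinE /dfun sum_ffunE; apply: eq_bigr => X _; rewrite scaleE. Qed.

Lemma dlin_eb X : dlin dE (eb X) = dbasis dE X.
Proof.
rewrite dlinE /dfun (bigD1 X) //= big1 => [|Y /negbTE nYX]; last by rewrite ebE nYX scale0r.
by rewrite ebE eqxx scale1r addr0.
Qed.

Lemma dbasis_coef L : dE =1 dE_of L ->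
  forall a u, dbasis dE (bits_set a) (bits_set u) = (dcoef L a u)%:~R.
Proof.
move=> dEL a u; rewrite /dbasis sum_ffunE /dcoef intr_zsum.
rewrite -[idx6]/(index_iota 0 6) big_mkord big_mkcond; apply: eq_bigr => n _.
rewrite (bits_set_represents a n); case: (nbit a n) => //.
have ba := bits_set_represents a.
rewrite scaleE intrM -[index_iota 0 6]/idx6 (represents_card (represents_ltn ba n)) signzE.
congr (_ * _); rewrite dEL /dE_of wedge_suml sum_ffunE intr_zsum.
apply: eq_bigr => pc _; rewrite wedgeZl scaleE intrM.
by rewrite (wedge_eb_coefz (bits_set_represents _) (representsD1 ba n) (bits_set_represents u)).
Qed.

End Differential.

Definition pdeg (a : nat) : nat := count (fun m => nbit a m && (m < 2)%N) idx6.
Definition qdeg (a : nat) : nat := count (fun m => ~~ (m < 2)%N && nbit a m) idx6.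

Lemma pdegE a : #|bits_set a :&: S12| = pdeg a.
Proof. exact: represents_card (representsI (bits_set_represents a) represents_S12). Qed.

Lemma qdegE a : #|bits_set a :\: S12| = qdeg a.
Proof. exact: represents_card (representsD (bits_set_represents a) represents_S12). Qed.

Definition coherent_step (a u : nat) : bool :=
  ((pdeg u == (pdeg a).+1) && (qdeg u == qdeg a)) ||
  [&& pdeg u == (pdeg a).+2, qdeg u == (qdeg a).-1 & (0 < qdeg a)%N].

Definition coherent_table (L : seq zform) : bool :=
  all (fun a => all (fun u => (dcoef L a u == 0) || coherent_step a u) (iota 0 64)) (iota 0 64).

(* phi, read as the functional y |-> Σ c y_u on (k+1)-forms, satisfies phi ∘ d = x |-> x_t
   on k-forms. *)
Definition certificate_ok (L : seq zform) (k t : nat) (phi : zform) : bool :=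
  all (fun a => (count (nbit a) idx6 != k) ||
                (zsum phi (fun uc => uc.2 * dcoef L a uc.1) == (a == t)%:Z)) (iota 0 64).

Definition vanishing_certified (L : seq zform) (k : nat)
    (ts : seq (nat * zform)) : bool :=
  all (fun a => (count (nbit a) idx6 == k) && (pdeg a == 0%N) ==> (a \in map fst ts)) (iota 0 64) &&
  all (fun tc => (tc.1 < 64)%N && certificate_ok L k tc.1 tc.2) ts.

Definition certified (L : seq zform) (ts3 ts4 : seq (nat * zform)) : bool :=
  [&& coherent_table L, vanishing_certified L 3 ts3 & vanishing_certified L 4 ts4].

Section Criteria.
Variable R : realType.
Local Notation F := (eform R).
Variables (dE : 'I_6 -> F) (L : seq zform).
Hypothesis dEL : dE =1 dE_of R L.

Lemma sum_bits_set (G : {set 'I_6} -> R) :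
  \sum_X G X = \sum_(n <- iota 0 64) G (bits_set n).
Proof.
rewrite (reindex (fun a : 'I_64 => bits_set a)) /=; last exact: onW_bij bits_set_bij.
by rewrite -(big_mkord xpredT (fun a => G (bits_set a))).
Qed.

Lemma coherent_V2 : coherent_table L -> coherent dE (V2 R).
Proof.
move=> /allP coh; split; first exact: complement_V2.
have dbasis_bideg X U : dbasis dE X U != 0 ->
    ((#|U :&: S12| == #|X :&: S12|.+1) && (#|U :\: S12| == #|X :\: S12|)) ||
    [&& #|U :&: S12| == #|X :&: S12|.+2, #|U :\: S12| == #|X :\: S12|.-1 & (0 < #|X :\: S12|)%N].
  have [a ha ->] := bits_setP X; have [u hu ->] := bits_setP U.
  rewrite (dbasis_coef dEL) intr_eq0 !pdegE !qdegE => /negbTE dau.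
  have aS : a \in iota 0 64 by rewrite mem_iota add0n ha.
  have uS : u \in iota 0 64 by rewrite mem_iota add0n hu.
  by have /allP/(_ u uS) := coh a aS; rewrite dau.
move=> p q; rewrite Lpq_coordsp /coordsp limg_span.
apply/span_subvP => _ /mapP[_ /mapP[X + ->] ->]; rewrite mem_enum => /andP[/eqP cA /eqP cB].
rewrite dlin_eb; case: q cB => [|q] cB /=; rewrite ?addv0 !Lpq_coordsp ?coordsp_add;
  apply/memv_coordsp => U; apply: contraNeq => /dbasis_bideg; rewrite cA cB /=.
  by rewrite ltnn !andbF orbF.
by rewrite /bideg; case/orP => [->|/and3P[-> -> _]]; rewrite ?orbT.
Qed.

Lemma closed_coef0 k t phi x : dlin dE x = 0 -> x \in coordsp R (ksub setT k) ->
  (t < 64)%N -> certificate_ok L k t phi -> x (bits_set t) = 0.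
Proof.
move=> dx0 /memv_coordsp xk ht /allP phiP.
have dx_coef u : \sum_(n <- iota 0 64) x (bits_set n) * (dcoef L n u)%:~R = 0.
  transitivity (dlin dE x (bits_set u)); last by rewrite dx0 ffunE.
  by rewrite dlin_coef sum_bits_set; apply: eq_bigr => n _; rewrite (dbasis_coef dEL).
have phi_coef n : n \in iota 0 64 -> x (bits_set n) * (n == t)%:R =
    \sum_(uc <- phi) uc.2%:~R * (x (bits_set n) * (dcoef L n uc.1)%:~R).
  move=> /phiP/orP[nk|/eqP phin].
    rewrite xk ?mul0r ?big1 // => [uc _|]; first by rewrite mul0r mulr0.
    by rewrite /ksub subsetT (represents_card (bits_set_represents n)).
  rewrite -[(n == t)%:R]/((n == t)%:Z%:~R) -phin intr_zsum mulr_sumr.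
  by apply: eq_bigr => uc _; rewrite intrM mulrCA.
have tS : t \in iota 0 64 by rewrite mem_iota add0n ht.
transitivity (\sum_(n <- iota 0 64) x (bits_set n) * (n == t)%:R).
  rewrite (bigD1_seq t) ?iota_uniq //= eqxx mulr1 big1 ?addr0 // => n /negbTE->.
  exact: mulr0.
rewrite (eq_big_seq _ phi_coef) exchange_big big1 // => uc _.
by rewrite -mulr_sumr dx_coef mulr0.
Qed.

Lemma memv_Fil1 k x : x \in coordsp R (ksub setT k) ->
  (forall X, #|X :&: S12| = 0%N -> x X = 0) -> x \in Fil (V2 R) k 1.
Proof.
move=> /memv_coordsp xk x0; rewrite (form_expand x); apply: memv_suml => X _.
have [/andP[_ /eqP cX]|/xk->] := boolP (ksub setT k X); last by rewrite scale0r mem0v.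
have [/x0->|p_gt0] := posnP #|X :&: S12|; first by rewrite scale0r mem0v.
have p_le : (#|X :&: S12| <= k)%N by rewrite -cX subset_leq_card ?subsetIl.
apply: memvZ; rewrite /Fil (bigD1_seq #|X :&: S12|) ?mem_index_iota ?p_gt0 ?iota_uniq //=.
apply: (subvP (addvSl _ _)); rewrite Lpq_coordsp; apply: eb_coordsp.
by rewrite /bideg /= cardsD cX !eqxx.
Qed.

Lemma hpq0_Fil1 k : (Zk dE k <= Fil (V2 R) k 1)%VS -> hpq dE (V2 R) 0 k = 0%N.
Proof.
move=> ZF; apply/eqP; rewrite /hpq add0n subn_eq0; apply/dimvS/addvS => //.
by rewrite subv_cap capvSl (subv_trans (capvSl _ _)).
Qed.

Lemma Zk_sub_Fil1 k ts : vanishing_certified L k ts -> (Zk dE k <= Fil (V2 R) k 1)%VS.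
Proof.
case/andP => /allP covered /allP certs; apply/subvP => x.
rewrite memv_cap memv_ker G1_coordsp Lam_coordsp => /andP[/eqP dx0 xk].
apply: memv_Fil1 => // X; have [a ha ->] := bits_setP X; rewrite pdegE => pa0.
have aS : a \in iota 0 64 by rewrite mem_iota add0n ha.
have [ck|nk] := eqVneq (count (nbit a) idx6) k; last first.
  move/memv_coordsp: xk; apply.
  by rewrite /ksub subsetT (represents_card (bits_set_represents a)) nk.
have := covered a aS; rewrite ck pa0 !eqxx => /mapP[[t phi] tphi /= ->].
by have /andP[ht phi_ok] := certs _ tphi; apply: closed_coef0 dx0 xk ht phi_ok.
Qed.

Lemma certified_sound ts3 ts4 : certified L ts3 ts4 ->
  coherent dE (V2 R) /\ hpq dE (V2 R) 0 3 = 0%N /\ hpq dE (V2 R) 0 4 = 0%N.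
Proof.
case/and3P => coh van3 van4; split; first exact: coherent_V2.
by split; apply/hpq0_Fil1/Zk_sub_Fil1; [exact: van3 | exact: van4].
Qed.

End Criteria.

Definition g1_table : seq zform :=
  [:: [::]; [::]; [:: (3%N, 1)]; [:: (5%N, 1)]; [:: (9%N, 1)]; [:: (17%N, 1)]].
Definition g1_cert3 : seq (nat * zform) :=
  [:: (28%N, [:: (39%N, -1); (27%N, 1)]); (44%N, [:: (29%N, 1)]);
   (52%N, [:: (51%N, 1)]); (56%N, [:: (53%N, 1)])].
Definition g1_cert4 : seq (nat * zform) := [:: (60%N, [:: (59%N, 1)])].
Lemma g1_certified : certified g1_table g1_cert3 g1_cert4.
Proof. by vm_compute. Qed.

Definition g2_table : seq zform :=
  [:: [::]; [::]; [:: (3%N, 1)]; [:: (5%N, 1)]; [:: (9%N, 1)]; [:: (6%N, 1); (17%N, 1)]].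
Definition g2_cert3 : seq (nat * zform) :=
  [:: (28%N, [:: (39%N, -1); (27%N, 1)]); (44%N, [:: (29%N, 1)]);
   (52%N, [:: (51%N, 1)]); (56%N, [:: (53%N, 1)])].
Definition g2_cert4 : seq (nat * zform) := [:: (60%N, [:: (59%N, 1)])].
Lemma g2_certified : certified g2_table g2_cert3 g2_cert4.
Proof. by vm_compute. Qed.

Definition g3_table : seq zform :=
  [:: [::]; [::]; [::]; [:: (3%N, 1)]; [:: (9%N, 1)]; [:: (10%N, 1)]].
Definition g3_cert3 : seq (nat * zform) :=
  [:: (28%N, [:: (23%N, -1)]); (44%N, [:: (39%N, -1)]);
   (52%N, [:: (45%N, 1)]); (56%N, [:: (51%N, 1)])].
Definition g3_cert4 : seq (nat * zform) := [:: (60%N, [:: (55%N, -1)])].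
Lemma g3_certified : certified g3_table g3_cert3 g3_cert4.
Proof. by vm_compute. Qed.

Definition g4_table : seq zform :=
  [:: [::]; [::]; [::]; [:: (3%N, 1)]; [:: (5%N, 1); (10%N, -1)]; [:: (9%N, 1); (6%N, 1)]].
Definition g4_cert3 : seq (nat * zform) :=
  [:: (28%N, [:: (23%N, -1); (43%N, 1)]); (44%N, [:: (39%N, -1); (27%N, -1)]);
   (52%N, [:: (29%N, -1)]); (56%N, [:: (51%N, 1)])].
Definition g4_cert4 : seq (nat * zform) := [:: (60%N, [:: (55%N, -1)])].
Lemma g4_certified : certified g4_table g4_cert3 g4_cert4.
Proof. by vm_compute. Qed.

Definition g5_table : seq zform :=
  [:: [::]; [::]; [::]; [:: (3%N, 1)]; [:: (9%N, 1)]; [:: (5%N, 1); (10%N, -1)]].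
Definition g5_cert3 : seq (nat * zform) :=
  [:: (28%N, [:: (23%N, -1); (43%N, -1)]); (44%N, [:: (39%N, -1)]);
   (52%N, [:: (45%N, 1)]); (56%N, [:: (51%N, 1)])].
Definition g5_cert4 : seq (nat * zform) := [:: (60%N, [:: (55%N, -1)])].
Lemma g5_certified : certified g5_table g5_cert3 g5_cert4.
Proof. by vm_compute. Qed.

Definition g6_table : seq zform :=
  [:: [::]; [::]; [::]; [:: (3%N, 1)]; [:: (5%N, 1); (9%N, 1)]; [:: (10%N, 1)]].
Definition g6_cert3 : seq (nat * zform) :=
  [:: (28%N, [:: (23%N, -1)]); (44%N, [:: (39%N, -1); (43%N, 1)]);
   (52%N, [:: (30%N, -1)]); (56%N, [:: (51%N, 1)])].
Definition g6_cert4 : seq (nat * zform) := [:: (60%N, [:: (55%N, -1)])].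
Lemma g6_certified : certified g6_table g6_cert3 g6_cert4.
Proof. by vm_compute. Qed.

Definition g7_table : seq zform :=
  [:: [::]; [::]; [::]; [:: (3%N, 1)]; [:: (5%N, 1)]; [:: (9%N, 1)]].
Definition g7_cert3 : seq (nat * zform) :=
  [:: (28%N, [:: (23%N, -1)]); (44%N, [:: (39%N, -1); (27%N, -1)]);
   (52%N, [:: (29%N, -1)]); (56%N, [:: (51%N, 1)])].
Definition g7_cert4 : seq (nat * zform) := [:: (60%N, [:: (55%N, -1)])].
Lemma g7_certified : certified g7_table g7_cert3 g7_cert4.
Proof. by vm_compute. Qed.

Definition g8_table : seq zform :=
  [:: [::]; [::]; [::]; [::]; [:: (3%N, 1)]; [:: (17%N, 1)]].
Definition g8_cert3 : seq (nat * zform) :=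
  [:: (28%N, [:: (15%N, 1)]); (44%N, [:: (29%N, 1)]);
   (52%N, [:: (39%N, -1)]); (56%N, [:: (43%N, -1)])].
Definition g8_cert4 : seq (nat * zform) := [:: (60%N, [:: (47%N, 1)])].
Lemma g8_certified : certified g8_table g8_cert3 g8_cert4.
Proof. by vm_compute. Qed.

Section Algebras.
Variable R : realType.
Local Notation eb := (@eb R).

Lemma e_bits i : (0 < i <= 6)%N -> e R i = eb (bits_set (2 ^ i.-1)).
Proof.
case/andP; rewrite /e; case: i => [|[|[|[|[|[|[|//]]]]]]] //= _ _; congr eb; apply/setP => j.
all: by rewrite !inE; case: j => [[|[|[|[|[|[|//]]]]]] hj]; rewrite -val_eqE /= inordK.
Qed.

Lemma ee_bits i j r s : (0 < i <= 6)%N -> (0 < j <= 6)%N -> s != 0 ->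
  wedge_coefz (nbit (2 ^ i.-1)) (nbit (2 ^ j.-1)) (nbit r) = s ->
  ee R i j = s%:~R *: eb (bits_set r).
Proof.
move=> hi hj s0; rewrite /ee !e_bits // wedge_eb /wedge_coefz.
case: ifP => [/andP[dis uni] <-|_ s0E]; last by rewrite -s0E eqxx in s0.
have bi := bits_set_represents (2 ^ i.-1); have bj := bits_set_represents (2 ^ j.-1).
rewrite (represents_disjoint bi bj) dis mul1r /wsign (represents_inversions bi bj) -signzE.
congr (_ *: eb _); apply/eqP.
by rewrite (represents_eq (representsU bi bj) (bits_set_represents r)).
Qed.

Ltac ee_tac := apply: ee_bits => //; vm_compute; reflexivity.

Lemma ee12 : ee R 1 2 = (1 : int)%:~R *: eb (bits_set 3). Proof. ee_tac. Qed.
Lemma ee13 : ee R 1 3 = (1 : int)%:~R *: eb (bits_set 5). Proof. ee_tac. Qed.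
Lemma ee14 : ee R 1 4 = (1 : int)%:~R *: eb (bits_set 9). Proof. ee_tac. Qed.
Lemma ee15 : ee R 1 5 = (1 : int)%:~R *: eb (bits_set 17). Proof. ee_tac. Qed.
Lemma ee23 : ee R 2 3 = (1 : int)%:~R *: eb (bits_set 6). Proof. ee_tac. Qed.
Lemma ee24 : ee R 2 4 = (1 : int)%:~R *: eb (bits_set 10). Proof. ee_tac. Qed.
Lemma ee42 : ee R 4 2 = (-1 : int)%:~R *: eb (bits_set 10). Proof. ee_tac. Qed.

Ltac table_tac := case=> [[|[|[|[|[|[|//]]]]]] hi];
  rewrite /g1 /g2 /g3 /g4 /g5 /g6 /g7 /g8 /mk6 /dE_of /= ?big_cons ?big_nil /= ?addr0
          ?ee12 ?ee13 ?ee14 ?ee15 ?ee23 ?ee24 ?ee42 //.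

Lemma g1_tableE : g1 R =1 dE_of R g1_table. Proof. table_tac. Qed.
Lemma g2_tableE : g2 R =1 dE_of R g2_table. Proof. table_tac. Qed.
Lemma g3_tableE : g3 R =1 dE_of R g3_table. Proof. table_tac. Qed.
Lemma g4_tableE : g4 R =1 dE_of R g4_table. Proof. table_tac. Qed.
Lemma g5_tableE : g5 R =1 dE_of R g5_table. Proof. table_tac. Qed.
Lemma g6_tableE : g6 R =1 dE_of R g6_table. Proof. table_tac. Qed.
Lemma g7_tableE : g7 R =1 dE_of R g7_table. Proof. table_tac. Qed.
Lemma g8_tableE : g8 R =1 dE_of R g8_table. Proof. table_tac. Qed.

End Algebras.

Unset Implicit Arguments.

Theorem lemma7 (R : realType) (dE : 'I_6 -> eform R) :
  (dE = @g1 R \/ dE = @g2 R \/ dE = @g3 R \/ dE = @g4 R \/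
   dE = @g5 R \/ dE = @g6 R \/ dE = @g7 R \/ dE = @g8 R) ->
  exists V2 : {vspace eform R},
    coherent dE V2 /\ hpq dE V2 0 3 = 0%N /\ hpq dE V2 0 4 = 0%N.
Proof.
move=> dE_cases; exists (V2 R).
case: dE_cases => [->|[->|[->|[->|[->|[->|[->|->]]]]]]].
- exact (certified_sound (g1_tableE R) g1_certified).
- exact (certified_sound (g2_tableE R) g2_certified).
- exact (certified_sound (g3_tableE R) g3_certified).
- exact (certified_sound (g4_tableE R) g4_certified).
- exact (certified_sound (g5_tableE R) g5_certified).
- exact (certified_sound (g6_tableE R) g6_certified).
- exact (certified_sound (g7_tableE R) g7_certified).
- exact (certified_sound (g8_tableE R) g8_certified).
Qed.
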